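(* For all integers $k>1$, \[ c_k=1+O\Bigl(\frac1k\Bigr) \] with an absolute implied constant, where \[ c_k := \frac{2k}{2k-1}\,\frac{\zeta(2-1/k)}{\zeta(2)}\,\zeta(k)^2\prod_{p}\Bigl(1-\frac{2p}{(p+1)p^{k}}\Bigr). \]
   Context: $\zeta$ is the Riemann zeta function and the product is over all primes $p$. *)

From Stdlib Require Import Reals ZArith Znumtheory.
From Coquelicot Require Import Coquelicot.
Open Scope R_scope.

Definition zeta (s : R) : R :=
  Series (fun n : nat => / Rpower (INR (S n)) s).

Definition euler_factor (k : nat) (p : nat) : R :=
  1 - 2 * INR p / ((INR p + 1) * INR p ^ k).

Fixpoint prime_prod (k : nat) (N : nat) : R :=
  match N with
  | O => 1
  | S m => prime_prod k m *
           (if prime_dec (Z.of_nat (S m)) then euler_factor k (S m) else 1)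
  end.

Definition euler_prod (k : nat) : R :=
  real (Lim_seq (fun N => prime_prod k N)).

Definition c_const (k : nat) : R :=
  (2 * INR k) / (2 * INR k - 1) * (zeta (2 - / INR k) / zeta 2)
  * (zeta (INR k)) ^ 2 * euler_prod k.

From Stdlib Require Import Reals ZArith Znumtheory Lra Lia Psatz.
From Coquelicot Require Import Coquelicot.
Open Scope R_scope.

(* Every factor of c_k lies within O(1/k) of 1, and all the error terms are
   bounded by multiples of zeta(3/2), which converges since
   n^(-3/2) <= 2 (1/sqrt(n-1) - 1/sqrt n).
   - For n >= 2, n^(-k) <= 2^(3/2-k) n^(-3/2), so zeta(k) - 1 <= 2^(3/2-k) zeta(3/2).
   - By Bernoulli's inequality with j = floor(k/2) >= k/3,
     j (n^(1/k) - 1) <= n^(j/k) - 1 <= sqrt n, so termwise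
     zeta(2 - 1/k) - zeta(2) <= (3/k) zeta(3/2).
   - Each Euler factor is at least 1 - (8/2^k)(1/p - 1/(p+1)), so the partial
     products telescope to at least 1 - 8/2^k. *)

Definition zeta_term (s : R) (n : nat) : R := / Rpower (INR (S n)) s.

Lemma zetaE s : zeta s = Series (zeta_term s).
Proof. reflexivity. Qed.

Lemma INR_S_ge1 n : 1 <= INR (S n).
Proof. rewrite S_INR; pose proof (pos_INR n); lra. Qed.

Lemma zeta_term_gt0 s n : 0 < zeta_term s n.
Proof. apply Rinv_0_lt_compat, exp_pos. Qed.

Lemma zeta_term_0 s : zeta_term s 0 = 1.
Proof. unfold zeta_term, Rpower; simpl; rewrite ln_1, Rmult_0_r, exp_0; apply Rinv_1. Qed.

Lemma zeta_term_le s t n : s <= t -> zeta_term t n <= zeta_term s n.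
Proof.
  intros Hst; apply Rinv_le_contravar; [apply exp_pos|].
  apply Rle_Rpower; [apply INR_S_ge1|exact Hst].
Qed.

Lemma inv_cube_le_telescope a b : 0 < a -> 0 < b -> b * b = a * a + 1 ->
  / (b * b * b) <= 2 * (/ a - / b).
Proof.
  intros Ha Hb Hab.
  assert (Hlt : a < b) by nra.
  replace (2 * (/ a - / b)) with (2 * (b - a) / (a * b)) by (field; lra).
  apply Rmult_le_reg_r with (a * b * (b * b * b)); [apply Rmult_lt_0_compat; nra|].
  assert (a <= 2 * (b * b) * (b - a)) by nra.
  field_simplify; [nra|split; lra|lra].
Qed.

Lemma zeta_term_3_2 n :
  zeta_term (3/2) n = / (sqrt (INR (S n)) * sqrt (INR (S n)) * sqrt (INR (S n))).
Proof.
  pose proof (INR_S_ge1 n).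
  unfold zeta_term; replace (3/2) with (1 + /2) by field.
  rewrite Rpower_plus, Rpower_1, Rpower_sqrt, sqrt_sqrt by lra; reflexivity.
Qed.

Lemma sum_zeta_term_3_2_le N : sum_n (zeta_term (3/2)) N <= 3 - 2 / sqrt (INR (S N)).
Proof.
  induction N as [|N IH].
  - rewrite sum_O, zeta_term_0; simpl INR; rewrite sqrt_1; lra.
  - rewrite sum_Sn, zeta_term_3_2; change plus with Rplus.
    pose proof (INR_S_ge1 N); pose proof (INR_S_ge1 (S N)).
    assert (Ha : 0 < sqrt (INR (S N))) by (apply sqrt_lt_R0; lra).
    assert (Hb : 0 < sqrt (INR (S (S N)))) by (apply sqrt_lt_R0; lra).
    assert (Hsq : sqrt (INR (S (S N))) * sqrt (INR (S (S N)))
                  = sqrt (INR (S N)) * sqrt (INR (S N)) + 1)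
      by (rewrite !sqrt_sqrt, (S_INR (S N)) by lra; reflexivity).
    pose proof (inv_cube_le_telescope _ _ Ha Hb Hsq); unfold Rdiv in *; lra.
Qed.

Lemma ex_series_zeta_term s : 3/2 <= s -> ex_series (zeta_term s).
Proof.
  intros Hs; apply (ex_series_le (zeta_term s) (zeta_term (3/2))).
  { intros n; change norm with Rabs; simpl.
    rewrite Rabs_pos_eq by (left; apply zeta_term_gt0); exact (zeta_term_le _ _ n Hs). }
  destruct (ex_finite_lim_seq_incr (sum_n (zeta_term (3/2))) 3) as [l Hl].
  - intros n; rewrite sum_Sn; change plus with Rplus.
    pose proof (zeta_term_gt0 (3/2) (S n)); lra.
  - intros n; pose proof (sum_zeta_term_3_2_le n).
    assert (0 < sqrt (INR (S n))) by (apply sqrt_lt_R0; pose proof (INR_S_ge1 n); lra).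
    assert (0 < 2 / sqrt (INR (S n))) by (apply Rdiv_lt_0_compat; lra); lra.
  - exists l; exact Hl.
Qed.

Lemma Series_ge0 a : (forall n, 0 <= a n) -> ex_series a -> 0 <= Series a.
Proof.
  intros Ha Hex; replace 0 with (0 * Series a) by ring; rewrite <- Series_scal_l.
  apply Series_le; [intros n; pose proof (Ha n); split; lra|exact Hex].
Qed.

Lemma zeta_shift s : 3/2 <= s -> zeta s = 1 + Series (fun n => zeta_term s (S n)).
Proof.
  intros Hs; rewrite zetaE, Series_incr_1, zeta_term_0 by (apply ex_series_zeta_term; lra).
  reflexivity.
Qed.

Lemma zeta_ge1 s : 3/2 <= s -> 1 <= zeta s.
Proof.
  intros Hs; rewrite zeta_shift by exact Hs.
  enough (0 <= Series (fun n => zeta_term s (S n))) by lra.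
  apply Series_ge0; [intros n; left; apply zeta_term_gt0|].
  apply (ex_series_incr_1 (zeta_term s)), ex_series_zeta_term, Hs.
Qed.

Lemma zeta_le s t : 3/2 <= s <= t -> zeta t <= zeta s.
Proof.
  intros Hst; rewrite !zetaE; apply Series_le; [|apply ex_series_zeta_term; lra].
  intros n; split; [left; apply zeta_term_gt0|apply zeta_term_le; lra].
Qed.

Lemma zeta_term_S_le s t n : t <= s ->
  zeta_term s (S n) <= Rpower 2 (t - s) * zeta_term t (S n).
Proof.
  intros Hts; unfold zeta_term; set (m := INR (S (S n))).
  assert (Hm : 2 <= m) by (unfold m; rewrite !S_INR; pose proof (pos_INR n); lra).
  assert (Hsplit : Rpower m s = Rpower m t * Rpower m (s - t))
    by (rewrite <- Rpower_plus; f_equal; ring).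
  assert (Hgrow : Rpower 2 (s - t) <= Rpower m (s - t)) by (apply Rle_Rpower_l; lra).
  pose proof (exp_pos (t * ln m)); pose proof (exp_pos ((s - t) * ln 2)).
  rewrite Hsplit, <- (Rinv_inv (Rpower 2 (t - s))), <- Rpower_Ropp.
  replace (- (t - s)) with (s - t) by ring.
  rewrite <- Rinv_mult; apply Rinv_le_contravar; [unfold Rpower in *; nra|].
  rewrite Rmult_comm; apply Rmult_le_compat_l; [unfold Rpower; lra|exact Hgrow].
Qed.

Lemma zeta_sub1_le s t : 3/2 <= t <= s -> zeta s - 1 <= Rpower 2 (t - s) * (zeta t - 1).
Proof.
  intros Hts; rewrite !zeta_shift by lra.
  replace (1 + Series (fun n => zeta_term t (S n)) - 1)
    with (Series (fun n => zeta_term t (S n))) by ring.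
  rewrite <- Series_scal_l; ring_simplify.
  apply Series_le.
  - intros n; split; [left; apply zeta_term_gt0|apply zeta_term_S_le; lra].
  - apply (ex_series_scal_l (V := R_NormedModule)).
    apply (ex_series_incr_1 (zeta_term t)), ex_series_zeta_term; lra.
Qed.

Lemma INR_le_pow2 n : INR n <= 2 ^ n.
Proof.
  replace 2 with (INR 2) by reflexivity; rewrite <- pow_INR.
  apply le_INR, Nat.lt_le_incl, Nat.pow_gt_lin_r; lia.
Qed.

Lemma zeta_nat_le k : (1 < k)%nat -> zeta (INR k) <= 1 + 4 * zeta (3/2) / INR k.
Proof.
  intros Hk; assert (Hk2 : 2 <= INR k) by (apply (le_INR 2); lia).
  assert (Hpow : Rpower 2 (3/2 - INR k) <= 4 / INR k).
  { apply Rle_trans with (Rpower 2 (2 - INR k)); [apply Rle_Rpower; lra|].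
    assert (H4 : Rpower 2 2 = 4).
    { replace 2 with (INR 2) at 2 by reflexivity; rewrite Rpower_pow; simpl; lra. }
    unfold Rminus; rewrite Rpower_plus, Rpower_Ropp, Rpower_pow, H4 by lra.
    pose proof (INR_le_pow2 k).
    unfold Rdiv; apply Rmult_le_compat_l; [lra|apply Rinv_le_contravar; lra]. }
  pose proof (zeta_sub1_le (INR k) (3/2) ltac:(lra)).
  pose proof (zeta_ge1 (3/2) ltac:(lra)).
  assert (0 <= Rpower 2 (3/2 - INR k)) by (left; apply exp_pos).
  assert (Rpower 2 (3/2 - INR k) * (zeta (3/2) - 1) <= 4 / INR k * zeta (3/2)) by nra.
  unfold Rdiv in *; lra.
Qed.

Lemma pow_Bernoulli y j : 1 <= y -> 1 + INR j * (y - 1) <= y ^ j.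
Proof.
  intros Hy; induction j as [|j IH]; [simpl; lra|].
  rewrite S_INR; simpl; pose proof (pos_INR j).
  assert (0 <= INR j * ((y - 1) * (y - 1))) by (apply Rmult_le_pos; nra).
  nra.
Qed.

Lemma Rpower_Bernoulli m r j : 1 <= m -> 0 <= r ->
  INR j * (Rpower m r - 1) <= Rpower m (INR j * r) - 1.
Proof.
  intros Hm Hr.
  assert (Hy : 1 <= Rpower m r) by (rewrite <- (Rpower_O m) by lra; apply Rle_Rpower; lra).
  rewrite (Rmult_comm (INR j) r), <- Rpower_mult, Rpower_pow by lra.
  pose proof (pow_Bernoulli _ j Hy); lra.
Qed.

Lemma zeta_term_sub_le r j n : (1 <= j)%nat -> 0 <= r -> INR j * r <= /2 ->
  zeta_term (2 - r) n - zeta_term 2 n <= / INR j * zeta_term (3/2) n.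
Proof.
  intros Hj Hr Hjr; unfold zeta_term; set (m := INR (S n)).
  assert (Hm : 1 <= m) by apply INR_S_ge1.
  assert (HjR : 1 <= INR j) by (apply (le_INR 1); exact Hj).
  pose proof (Rpower_Bernoulli m r j Hm Hr) as Hb.
  assert (Hhalf : Rpower m (INR j * r) <= Rpower m (/2)) by (apply Rle_Rpower; lra).
  rewrite <- !Rpower_Ropp; replace (- (2)) with (-2) by ring.
  replace (- (2 - r)) with (r + -2) by ring; replace (- (3/2)) with (/2 + -2) by field.
  rewrite !Rpower_plus.
  pose proof (exp_pos (-2 * ln m)); pose proof (exp_pos (/2 * ln m)).
  fold (Rpower m (-2)) (Rpower m (/2)) in *.
  assert (Rpower m r - 1 <= / INR j * Rpower m (/2)).
  { apply Rmult_le_reg_l with (INR j); [lra|].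
    rewrite <- Rmult_assoc, Rinv_r, Rmult_1_l by lra; lra. }
  nra.
Qed.

Lemma zeta_sub_le r j : (1 <= j)%nat -> 0 <= r -> INR j * r <= /2 ->
  zeta (2 - r) - zeta 2 <= / INR j * zeta (3/2).
Proof.
  intros Hj Hr Hjr.
  assert (HjR : 1 <= INR j) by (apply (le_INR 1); exact Hj).
  assert (Hr2 : r <= /2) by nra.
  rewrite !zetaE, <- Series_minus, <- Series_scal_l by (apply ex_series_zeta_term; lra).
  apply Series_le.
  - intros n; split; [|apply zeta_term_sub_le; assumption].
    pose proof (zeta_term_le (2 - r) 2 n ltac:(lra)); lra.
  - apply (ex_series_scal_l (V := R_NormedModule)), ex_series_zeta_term; lra.
Qed.

Lemma half_floor_bounds k : (1 < k)%nat ->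
  (1 <= k / 2)%nat /\ (2 * (k / 2) <= k)%nat /\ (k <= 3 * (k / 2))%nat.
Proof.
  intros Hk; pose proof (Nat.div_mod k 2 ltac:(lia)).
  pose proof (Nat.mod_upper_bound k 2 ltac:(lia)); lia.
Qed.

Lemma zeta_two_sub_inv_le k : (1 < k)%nat ->
  zeta (2 - / INR k) - zeta 2 <= 3 * zeta (3/2) / INR k.
Proof.
  intros Hk; destruct (half_floor_bounds k Hk) as (Hj1 & Hj2 & Hj3).
  assert (Rj1 : 1 <= INR (k / 2)) by (apply (le_INR 1); exact Hj1).
  apply le_INR in Hj2, Hj3; rewrite !mult_INR in Hj2, Hj3.
  change (INR 2) with (1 + 1) in Hj2; change (INR 3) with (1 + 1 + 1) in Hj3.
  pose proof (zeta_ge1 (3/2) ltac:(lra)).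
  apply Rle_trans with (/ INR (k / 2) * zeta (3/2)).
  - apply zeta_sub_le; [exact Hj1|left; apply Rinv_0_lt_compat; lra|].
    apply Rmult_le_reg_l with (2 * INR k); [lra|].
    field_simplify; lra.
  - replace (3 * zeta (3/2) / INR k) with (3 / INR k * zeta (3/2)) by (field; lra).
    apply Rmult_le_compat_r; [lra|].
    apply Rmult_le_reg_l with (INR (k / 2) * INR k); [nra|].
    field_simplify; lra.
Qed.

Lemma euler_defect_le k p : (1 < k)%nat -> 2 <= p ->
  2 * p / ((p + 1) * p ^ k) <= 8 / 2 ^ k * (/ p - / (p + 1)).
Proof.
  intros Hk Hp; destruct k as [|[|K]]; try lia.
  assert (HK : 2 ^ K <= p ^ K) by (apply pow_incr; lra).
  assert (H2K : 0 < 2 ^ K) by (apply pow_lt; lra).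
  replace (2 * p / ((p + 1) * p ^ S (S K))) with (2 / (p * (p + 1)) * / p ^ K)
    by (simpl; field; repeat split; lra).
  replace (8 / 2 ^ S (S K) * (/ p - / (p + 1))) with (2 / (p * (p + 1)) * / 2 ^ K)
    by (simpl; field; repeat split; lra).
  apply Rmult_le_compat_l; [apply Rdiv_le_0_compat; nra|apply Rinv_le_contravar; lra].
Qed.

Lemma prime_factor_bounds k n : (1 < k)%nat ->
  1 - 8 / 2 ^ k * (/ INR (S n) - / INR (S (S n)))
    <= (if prime_dec (Z.of_nat (S n)) then euler_factor k (S n) else 1) <= 1.
Proof.
  intros Hk; pose proof (INR_S_ge1 n); rewrite (S_INR (S n)).
  assert (H2k : 0 < 2 ^ k) by (apply pow_lt; lra).
  assert (0 <= 8 / 2 ^ k * (/ INR (S n) - / (INR (S n) + 1))).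
  { apply Rmult_le_pos; [apply Rdiv_le_0_compat; lra|].
    assert (/ (INR (S n) + 1) <= / INR (S n)) by (apply Rinv_le_contravar; lra); lra. }
  destruct prime_dec as [Hp|_]; [|lra].
  apply prime_ge_2 in Hp; assert (Hp2 : 2 <= INR (S n)) by (apply (le_INR 2); lia).
  pose proof (euler_defect_le k _ Hk Hp2).
  assert (0 <= 2 * INR (S n) / ((INR (S n) + 1) * INR (S n) ^ k)).
  { apply Rdiv_le_0_compat; [lra|apply Rmult_lt_0_compat; [lra|apply pow_lt; lra]]. }
  unfold euler_factor; lra.
Qed.

Lemma prime_prod_bounds k N : (1 < k)%nat ->
  0 <= prime_prod k N <= 1 /\ 1 - 8 / 2 ^ k <= prime_prod k N.
Proof.
  intros Hk; set (D := 8 / 2 ^ k).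
  assert (HD : 0 <= D <= 2).
  { assert (H4 : 2 ^ 2 <= 2 ^ k) by (apply Rle_pow; [lra|lia]).
    simpl in H4; unfold D; split; [apply Rdiv_le_0_compat; lra|].
    apply Rmult_le_reg_r with (2 ^ k); [lra|].
    unfold Rdiv; rewrite Rmult_assoc, Rinv_l by lra; lra. }
  enough (Hinv : 0 <= prime_prod k N <= 1 /\ 1 - D + D / INR (S N) <= prime_prod k N).
  { pose proof (INR_S_ge1 N).
    assert (0 <= D / INR (S N)) by (apply Rdiv_le_0_compat; lra); lra. }
  induction N as [|N [IH01 IHlow]].
  - simpl; unfold Rdiv; rewrite Rinv_1; lra.
  - pose proof (prime_factor_bounds k N Hk) as Hf; fold D in Hf.
    change (prime_prod k (S N)) with (prime_prod k N
      * (if prime_dec (Z.of_nat (S N)) then euler_factor k (S N) else 1)).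
    set (f := if prime_dec (Z.of_nat (S N)) then euler_factor k (S N) else 1) in *.
    set (a := INR (S N)) in *; pose proof (INR_S_ge1 N) as Ha; fold a in Ha.
    rewrite (S_INR (S N)) in *; fold a in Hf |- *.
    set (t := D * (/ a - / (a + 1))) in *.
    assert (Ht : 0 <= t <= 1).
    { replace t with (D / (a * (a + 1))) by (unfold t; field; lra).
      split; [apply Rdiv_le_0_compat; nra|].
      apply Rmult_le_reg_r with (a * (a + 1)); [nra|].
      unfold Rdiv; rewrite Rmult_assoc, Rinv_l by nra; nra. }
    assert (Htel : D / (a + 1) = D / a - t) by (unfold t; field; lra).
    rewrite Htel; split; [split|]; nra.
Qed.

Lemma real_Lim_seq_between u a b : (forall n, a <= u n <= b) -> a <= real (Lim_seq u) <= b.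
Proof.
  intros Hu.
  assert (Hlo : Rbar_le a (Lim_seq u)).
  { rewrite <- (Lim_seq_const a); apply Lim_seq_le_loc; exists O; intros n _; apply Hu. }
  assert (Hhi : Rbar_le (Lim_seq u) b).
  { rewrite <- (Lim_seq_const b); apply Lim_seq_le_loc; exists O; intros n _; apply Hu. }
  destruct (Lim_seq u); simpl in *; tauto.
Qed.

Lemma euler_prod_bounds k : (1 < k)%nat ->
  0 <= euler_prod k <= 1 /\ 1 - 8 / INR k <= euler_prod k.
Proof.
  intros Hk; unfold euler_prod.
  assert (Hk2 : 2 <= INR k) by (apply (le_INR 2); lia).
  assert (HD : 8 / 2 ^ k <= 8 / INR k).
  { unfold Rdiv; apply Rmult_le_compat_l; [lra|].
    apply Rinv_le_contravar; [lra|apply INR_le_pow2]. }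
  split.
  - apply real_Lim_seq_between; intros N; apply (prime_prod_bounds k N Hk).
  - apply (real_Lim_seq_between _ _ 1); intros N.
    destruct (prime_prod_bounds k N Hk); lra.
Qed.

Definition one_plus_O_inv_above (f : nat -> R) : Prop :=
  exists C, forall k, (1 < k)%nat -> 1 <= f k <= 1 + C / INR k.

Lemma one_plus_O_inv_above_mul f g : one_plus_O_inv_above f -> one_plus_O_inv_above g ->
  one_plus_O_inv_above (fun k => f k * g k).
Proof.
  intros [C1 Hf] [C2 Hg]; exists (C1 + C2 + C1 * C2); intros k Hk.
  specialize (Hf k Hk); specialize (Hg k Hk).
  assert (Hx : 0 < / INR k <= 1).
  { assert (1 < INR k) by (apply (lt_INR 1); exact Hk).
    split; [apply Rinv_0_lt_compat; lra|].
    rewrite <- Rinv_1; apply Rinv_le_contravar; lra. }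
  unfold Rdiv in *; set (x := / INR k) in *.
  assert (0 <= C1) by nra; assert (0 <= C2) by nra.
  assert (0 <= C1 * C2 * x * (1 - x)) by (repeat apply Rmult_le_pos; lra).
  assert (f k * g k <= (1 + C1 * x) * (1 + C2 * x)) by (apply Rmult_le_compat; lra).
  split; nra.
Qed.

Lemma one_plus_O_inv_above_pow f n : one_plus_O_inv_above f ->
  one_plus_O_inv_above (fun k => f k ^ n).
Proof.
  intros Hf; induction n as [|n IH].
  - exists 0; intros k _; simpl; unfold Rdiv; lra.
  - exact (one_plus_O_inv_above_mul f (fun k => f k ^ n) Hf IH).
Qed.

Lemma one_plus_O_inv_above_mul_le1 f e D : one_plus_O_inv_above f ->
  (forall k, (1 < k)%nat -> 0 <= e k <= 1 /\ 1 - D / INR k <= e k) ->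
  exists C, forall k, (1 < k)%nat -> Rabs (f k * e k - 1) <= C / INR k.
Proof.
  intros [C Hf] He; exists (C + D); intros k Hk.
  specialize (Hf k Hk); specialize (He k Hk).
  unfold Rdiv in *; rewrite Rmult_plus_distr_r.
  assert (e k <= f k * e k <= f k) by (split; nra).
  apply Rabs_le; split; lra.
Qed.

Lemma two_k_ratio_one_plus_O_inv :
  one_plus_O_inv_above (fun k => 2 * INR k / (2 * INR k - 1)).
Proof.
  exists 1; intros k Hk.
  assert (Hk1 : 1 < INR k) by (apply (lt_INR 1); exact Hk).
  replace (2 * INR k / (2 * INR k - 1)) with (1 + / (2 * INR k - 1)) by (field; lra).
  assert (0 < / (2 * INR k - 1)) by (apply Rinv_0_lt_compat; lra).
  assert (/ (2 * INR k - 1) <= / INR k) by (apply Rinv_le_contravar; lra).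
  unfold Rdiv; lra.
Qed.

Lemma zeta_ratio_one_plus_O_inv :
  one_plus_O_inv_above (fun k => zeta (2 - / INR k) / zeta 2).
Proof.
  exists (3 * zeta (3/2)); intros k Hk.
  assert (Hk2 : 2 <= INR k) by (apply (le_INR 2); lia).
  assert (Hinv : 0 < / INR k <= / 2)
    by (split; [apply Rinv_0_lt_compat|apply Rinv_le_contravar]; lra).
  pose proof (zeta_ge1 2 ltac:(lra)).
  pose proof (zeta_le (2 - / INR k) 2 ltac:(lra)).
  pose proof (zeta_two_sub_inv_le k Hk).
  pose proof (zeta_ge1 (3/2) ltac:(lra)).
  replace (zeta (2 - / INR k) / zeta 2) with (1 + (zeta (2 - / INR k) - zeta 2) / zeta 2)
    by (field; lra).
  assert (Hq : 0 <= (zeta (2 - / INR k) - zeta 2) / zeta 2 <= zeta (2 - / INR k) - zeta 2).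
  { split; [apply Rdiv_le_0_compat; lra|].
    apply Rmult_le_reg_r with (zeta 2); [lra|].
    unfold Rdiv; rewrite Rmult_assoc, Rinv_l by lra; nra. }
  lra.
Qed.

Lemma zeta_nat_one_plus_O_inv : one_plus_O_inv_above (fun k => zeta (INR k)).
Proof.
  exists (4 * zeta (3/2)); intros k Hk.
  assert (Hk2 : 2 <= INR k) by (apply (le_INR 2); lia).
  split; [apply zeta_ge1; lra|apply zeta_nat_le, Hk].
Qed.

Theorem theorem3p1 :
  exists C : R, forall k : nat, (1 < k)%nat ->
    Rabs (c_const k - 1) <= C / INR k.
Proof.
  apply (one_plus_O_inv_above_mul_le1 _ euler_prod 8); [|exact euler_prod_bounds].
  apply one_plus_O_inv_above_mul; [apply one_plus_O_inv_above_mul|].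
  - exact two_k_ratio_one_plus_O_inv.
  - exact zeta_ratio_one_plus_O_inv.
  - exact (one_plus_O_inv_above_pow _ 2 zeta_nat_one_plus_O_inv).
Qed.
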